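(* Let $I$ be a $P$-interval of $\mathcal{P}$ with $|I|\geq 2$ and $D(I)=\{x_1,\ldots,x_r\}$. Then $I$ is a $b$-nested common interval if and only if there is some $i$ with $1\leq i\leq r$ such that $Int(x_i)$ is a $b$-nested common interval of size at least $|I|-b$.
   Context: Let $n\geq 1$, $K\geq 1$ and let $\mathcal{P}=\{P_1,\ldots,P_K\}$ be permutations of $\{1,\ldots,n\}$ with $P_1=(1,2,\ldots,n)$. For integers $i\leq j$ write $(i..j)=\{i,\ldots,j\}$. A common interval of $\mathcal{P}$ is a set of integers occupying consecutive positions in every $P_k$; all have the form $(i..j)$, and singletons and $(1..n)$ are common. Fix a positive integer $b$. A common interval $I$ is $b$-small if $|I|\leq b$, $b$-large otherwise; it is $b$-nested if $|I|=1$ or $I$ strictly contains a $b$-nested common interval $J$ with $|J|\geq|I|-b$ (recursive on size). Two intervals $(i..j)$, $(k..l)$ overlap if $i<k\leq j<l$ or $k<i\leq l<j$. A common interval is strong if it overlaps no other common interval. The PQ-tree $T$: nodes are the strong common intervals ($Int(x)$ is the interval of node $x$), root $(1..n)$, leaves the singletons, parent of $y$ is the node whose interval is the smallest strong common interval strictly containing $Int(y)$. A node $x$ with children set $D$ is a $P$-node if no union $\bigcup_{z\in D'}Int(z)$, $D'\subset D$, $2\leq|D'|<|D|$, is common; otherwise it is a $Q$-node with children ordered $y_1,\ldots,y_r$ so that $\max Int(y_i)+1=\min Int(y_{i+1})$. It is known that a set is a common interval iff it is $Int(x)$ for a node $x$ or the union of the intervals of consecutive children of a unique $Q$-node. The domain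 $D(I)$ of a common interval $I$ is the set of children of $x$ if $I=Int(x)$ is strong, and otherwise the set of consecutive children of the $Q$-node whose intervals have union $I$. A $P$-interval is a strong common interval $Int(x)$ with $x$ a $P$-node; all other common intervals are $Q$-intervals. *)

(* Elements {1..n} are modelled as 'I_n (0-based). *)
From mathcomp Require Import all_boot fingroup perm.
Set Implicit Arguments. Unset Strict Implicit. Unset Printing Implicit Defensive.

Section CommonIntervals.
Variable n : nat.
(* A permutation P_k is a bijection positions -> elements:
   position i holds element (p i). *)
Variable Ps : seq {perm 'I_n}.

Definition consecutive (p : {perm 'I_n}) (S : {set 'I_n}) : bool :=
  (S != set0) &&
  [forall i : 'I_n, forall j : 'I_n, forall k : 'I_n,
     [&& p i \in S, p j \in S & (i <= k <= j)%N] ==> (p k \in S)].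

Definition common (S : {set 'I_n}) : bool := all (fun p => consecutive p S) Ps.

Definition itv (i j : nat) : {set 'I_n} := [set x : 'I_n | (i <= x <= j)%N].

Definition overlap (I J : {set 'I_n}) : bool :=
  [exists i : 'I_n, exists j : 'I_n, exists k : 'I_n, exists l : 'I_n,
     [&& (i <= j)%N, (k <= l)%N, I == itv i j, J == itv k l &
         ((i < k <= j)%N && (j < l)%N) || ((k < i <= l)%N && (l < j)%N)]].

Definition strong (I : {set 'I_n}) : bool :=
  common I && [forall J : {set 'I_n}, common J ==> ~~ overlap I J].

(* X is the parent of Y in the PQ-tree: X is the smallest strong common
   interval strictly containing the strong interval Y *)
Definition child (X Y : {set 'I_n}) : bool :=
  [&& strong X, strong Y, Y \proper X &
      [forall Z : {set 'I_n}, (strong Z && (Y \proper Z)) ==> (X \subset Z)]].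

Definition children (X : {set 'I_n}) : {set {set 'I_n}} := [set Y | child X Y].

Definition Pnode (X : {set 'I_n}) : bool :=
  [forall D' : {set {set 'I_n}},
     [&& D' \subset children X, 2 <= #|D'| & #|D'| < #|children X|] ==>
     ~~ common (\bigcup_(Y in D') Y)].

Definition P_interval (I : {set 'I_n}) : bool := strong I && Pnode I.

Fixpoint nestedn (b m : nat) (I : {set 'I_n}) : bool :=
  match m with
  | 0 => false
  | m'.+1 => (#|I| == 1) ||
      [exists J : {set 'I_n},
         [&& common J, J \proper I, (#|I| - b <= #|J|)%N & nestedn b m' J]]
  end.

Definition nested (b : nat) (I : {set 'I_n}) : bool := nestedn b #|I| I.

End CommonIntervals.

From mathcomp Require Import all_boot fingroup perm zify.
Set Implicit Arguments. Unset Strict Implicit. Unset Printing Implicit Defensive.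

(* Strong common intervals are laminar with respect to all common intervals:
   a common interval meeting a strong one contains it or is contained in it.
   Hence a common interval J strictly inside a P-node I lies inside one child
   of I: otherwise every child meeting J is contained in J, so J is the union
   of at least two, but not all, of the children, contradicting that no such
   union is common at a P-node. The b-nested witness J of I can therefore be
   traded for the child containing it, which is b-nested because J is; the
   converse direction is the definition of b-nestedness. *)

Section PQTree.
Variable n : nat.
Variable Ps : seq {perm 'I_n}.
Hypothesis Ps_gt0 : (0 < size Ps)%N.
Hypothesis P1_id : nth 1%g Ps 0 = 1%g.

Definition convex (S : {set 'I_n}) :=
  forall i j k : 'I_n, i \in S -> j \in S -> (i <= k <= j)%N -> k \in S.

Lemma common_consecutive1 S : common Ps S -> consecutive 1%g S.
Proof. by move=> /allP /(_ _ (mem_nth 1%g Ps_gt0)); rewrite P1_id. Qed.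

Lemma common_neq0 S : common Ps S -> S != set0.
Proof. by move/common_consecutive1/andP => []. Qed.

Lemma common_convex S : common Ps S -> convex S.
Proof.
move/common_consecutive1/andP => [_ /forallP cS] i j k Si Sj ikj.
move/forallP/(_ j)/forallP/(_ k)/implyP: (cS i); rewrite !perm1; apply.
by rewrite Si Sj ikj.
Qed.

Lemma convex_itv S : S != set0 -> convex S ->
  exists i j : 'I_n, (i <= j)%N /\ S = itv n i j.
Proof.
move=> /set0Pn [x0 Sx0] cS.
case: (arg_minnP (fun x : 'I_n => val x) Sx0) => i Si imin.
case: (arg_maxnP (fun x : 'I_n => val x) Sx0) => j Sj jmax.
exists i, j; split; first exact: imin.
apply/setP => k; rewrite inE; apply/idP/idP; last exact: cS.
by move=> Sk; apply/andP; split; [exact: imin | exact: jmax].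
Qed.

Lemma common_overlap S T x y z : common Ps S -> common Ps T ->
  x \in S -> x \in T -> y \in S -> y \notin T -> z \in T -> z \notin S ->
  overlap S T.
Proof.
move=> cS cT.
have [i [j [ij ->]]] := convex_itv (common_neq0 cS) (common_convex cS).
have [k [l [kl ->]]] := convex_itv (common_neq0 cT) (common_convex cT).
rewrite !inE => ? ? ? ? ? ?.
apply/existsP; exists i; apply/existsP; exists j; apply/existsP; exists k.
by apply/existsP; exists l; rewrite ij kl !eqxx /=; lia.
Qed.

Lemma strong_common X : strong Ps X -> common Ps X.
Proof. by case/andP. Qed.

Lemma strong_laminar X Y z : strong Ps X -> common Ps Y ->
  z \in X -> z \in Y -> X \subset Y \/ Y \subset X.
Proof.
move=> sX cY zX zY; have [cX /forallP noovl] := andP sX.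
case: (boolP (X \subset Y)) => [|/subsetPn [y Xy nYy]]; [by left | right].
apply/subsetP => w Yw; apply/negPn/negP => nXw.
move/implyP: (noovl Y) => /(_ cY)/negP; apply.
exact: (common_overlap cX cY zX zY Xy nYy Yw nXw).
Qed.

Lemma common_set1 (x : 'I_n) : common Ps [set x].
Proof.
apply/allP => p _; apply/andP; split; first by apply/set0Pn; exists x; rewrite inE.
apply/forallP=> i; apply/forallP=> j; apply/forallP=> k; apply/implyP.
rewrite !inE => /and3P[/eqP pix /eqP pjx ikj].
have eij : i = j by apply: (@perm_inj _ p); rewrite pix pjx.
subst j; have -> : k = i by apply/val_inj => /=; lia.
by rewrite pix.
Qed.

Lemma overlap_set1 (x : 'I_n) J : ~~ overlap [set x] J.
Proof.
apply/negP => /existsP[i /existsP[j /existsP[k /existsP[l]]]].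
move=> /and5P[ij _ /eqP e1 _ H].
have : i \in [set x] by rewrite e1 inE leqnn ij.
have : j \in [set x] by rewrite e1 inE ij leqnn.
by rewrite !inE => /eqP ej /eqP ei; move: H; rewrite ej ei; lia.
Qed.

Lemma strong_set1 (x : 'I_n) : strong Ps [set x].
Proof.
rewrite /strong common_set1; apply/forallP => J; apply/implyP => _.
exact: overlap_set1.
Qed.

Lemma children_strong I C : C \in children Ps I -> strong Ps C.
Proof. by rewrite inE => /and4P[]. Qed.

Lemma children_proper I C : C \in children Ps I -> C \proper I.
Proof. by rewrite inE => /and4P[]. Qed.

Lemma children_cover I x : strong Ps I -> (1 < #|I|)%N -> x \in I ->
  exists2 C, C \in children Ps I & x \in C.
Proof.
move=> sI I_gt1 xI.
pose below S := [&& strong Ps S, x \in S & S \proper I].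
have below_x : below [set x].
  by rewrite /below strong_set1 set11 properEcard sub1set xI cards1.
have [S /and3P[sS xS SI] Smax] := arg_maxnP (fun S : {set 'I_n} => #|S|) below_x.
exists S => //; rewrite inE /child sI sS SI.
apply/forallP=> Z; apply/implyP=> /andP[sZ SZ].
have xZ : x \in Z := subsetP (proper_sub SZ) x xS.
case: (strong_laminar sZ (strong_common sI) xZ xI) => [ZI|//].
have [-> //|nZI] := eqVneq Z I.
have := Smax Z; rewrite /below sZ xZ properEneq nZI ZI => /(_ isT).
by have := proper_card SZ; lia.
Qed.

Section InsideAChild.
Variables I J : {set 'I_n}.
Hypotheses (sI : strong Ps I) (I_gt1 : (1 < #|I|)%N).
Hypotheses (cJ : common Ps J) (JI : J \proper I).
Hypothesis J_notin_child : forall C, C \in children Ps I -> ~~ (J \subset C).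

Definition children_meeting := [set C in children Ps I | C :&: J != set0].

Lemma children_meeting_sub : children_meeting \subset children Ps I.
Proof. by apply/subsetP => C; rewrite inE => /andP[]. Qed.

Lemma children_meeting_in y C :
  y \in J -> C \in children Ps I -> y \in C -> C \in children_meeting.
Proof.
by move=> Jy CI Cy; rewrite inE CI; apply/set0Pn; exists y; rewrite !inE Cy.
Qed.

Lemma child_of_J y : y \in J -> exists2 C, C \in children Ps I & y \in C.
Proof. by move=> Jy; apply: children_cover => //; apply: subsetP (proper_sub JI) y Jy. Qed.

Lemma bigcup_children_meeting : \bigcup_(C in children_meeting) C = J.
Proof.
apply/setP => y; apply/bigcupP/idP => [[C]|Jy].
  rewrite inE => /andP[CI /set0Pn[w]]; rewrite inE => /andP[Cw Jw] Cy.
  case: (strong_laminar (children_strong CI) cJ Cw Jw) => [CJ|JC].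
    exact: subsetP CJ y Cy.
  by move: (J_notin_child CI); rewrite JC.
by have [C CI Cy] := child_of_J Jy; exists C => //; apply: (children_meeting_in Jy).
Qed.

Lemma two_le_card_children_meeting : (2 <= #|children_meeting|)%N.
Proof.
have /set0Pn[y Jy] := common_neq0 cJ.
have [Cy CyI yCy] := child_of_J Jy.
have /subsetPn [z Jz nCz] := J_notin_child CyI.
have [Cz CzI zCz] := child_of_J Jz.
have neq : Cy != Cz by apply: contraNneq nCz => ->.
have : [set Cy; Cz] \subset children_meeting.
  by apply/subsetP => C /set2P[->|->]; [exact: (children_meeting_in Jy) |
                                         exact: (children_meeting_in Jz)].
by move/subset_leq_card; rewrite cards2 neq.
Qed.

Lemma card_children_meeting_lt : (#|children_meeting| < #|children Ps I|)%N.
Proof.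
rewrite proper_card // properE children_meeting_sub /=; apply/negP => chD.
suff IJ : I \subset J by move: JI; rewrite properE IJ andbF.
apply/subsetP => y Iy; have [C CI Cy] := children_cover sI I_gt1 Iy.
rewrite -bigcup_children_meeting; apply/bigcupP.
by exists C => //; apply: (subsetP chD).
Qed.

End InsideAChild.

Lemma P_interval_sub_child I J : P_interval Ps I -> (1 < #|I|)%N ->
  common Ps J -> J \proper I -> exists2 C, C \in children Ps I & J \subset C.
Proof.
move=> /andP[sI /forallP Pnode_I] I_gt1 cJ JI.
case: (boolP [exists C in children Ps I, J \subset C]) => [/existsP[C /andP[]]|].
  by exists C.
move/exists_inPn => J_notin_child; exfalso.
have := Pnode_I (children_meeting I J).
by rewrite bigcup_children_meeting // cJ children_meeting_sub
  two_le_card_children_meeting // card_children_meeting_lt.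
Qed.

Variable b : nat.

Lemma nestedn_fuel m m' (J : {set 'I_n}) : (#|J| <= m)%N -> (#|J| <= m')%N ->
  nestedn Ps b m J = nestedn Ps b m' J.
Proof.
have no_proper_sub0 (K : {set 'I_n}) k : #|K| = 0 ->
    [exists J', [&& common Ps J', J' \proper K, (#|K| - b <= #|J'|)%N &
                    nestedn Ps b k J']] = false.
  by move=> K0; apply/existsP => -[J' /and4P[_ /proper_card]]; rewrite K0.
elim: m m' J => [|m IH] [|m'] J //= Jm Jm'.
- by move: Jm; rewrite leqn0 => /eqP J0; rewrite no_proper_sub0 // J0.
- by move: Jm'; rewrite leqn0 => /eqP J0; rewrite no_proper_sub0 // J0.
congr (_ || _); apply: eq_existsb => J'.
case: (boolP (J' \proper J)) => [JJ'|]; last by rewrite andbF.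
have J'_lt := proper_card JJ'.
by rewrite (IH m') // -ltnS (leq_trans J'_lt).
Qed.

Lemma nestedE (J : {set 'I_n}) : (0 < #|J|)%N -> nested Ps b J = (#|J| == 1) ||
  [exists J', [&& common Ps J', J' \proper J, (#|J| - b <= #|J'|)%N & nested Ps b J']].
Proof.
rewrite /nested; case: {-1}#|J| (erefl #|J|) => [|m] // Jm _ /=.
rewrite Jm; congr (_ || _); apply: eq_existsb => J'.
case: (boolP (J' \proper J)) => [JJ'|]; last by rewrite andbF.
have J'_lt := proper_card JJ'.
by rewrite (nestedn_fuel (m := m) (m' := #|J'|)) // -ltnS -Jm.
Qed.

Lemma nested_superset (J I : {set 'I_n}) : common Ps J -> nested Ps b J ->
  J \subset I -> (#|I| - b <= #|J|)%N -> nested Ps b I.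
Proof.
move=> cJ nJ; rewrite subEproper => /predU1P[<- //|JI] large.
have I_gt0 : (0 < #|I|)%N by apply: leq_ltn_trans (proper_card JI).
rewrite nestedE //; apply/orP; right.
by apply/existsP; exists J; rewrite cJ JI large nJ.
Qed.

End PQTree.

Theorem lemma2 (n : nat) (Ps : seq {perm 'I_n}) (b : nat)
  (n_gt0 : (0 < n)%N) (K_gt0 : (0 < size Ps)%N) (P1_id : nth 1%g Ps 0 = 1%g)
  (b_gt0 : (0 < b)%N)
  (I : {set 'I_n}) (HI : P_interval Ps I) (HI2 : (2 <= #|I|)%N) :
  nested Ps b I <->
  exists2 x, x \in children Ps I & nested Ps b x && (#|I| - b <= #|x|)%N.
Proof.
split=> [|[C CI /andP[nC large]]]; last first.
  exact: nested_superset (strong_common (children_strong CI)) nC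
           (proper_sub (children_proper CI)) large.
rewrite nestedE ?(ltnW HI2) // gtn_eqF //= => /existsP[J /and4P[cJ JI large nJ]].
have [C CI JC] := P_interval_sub_child K_gt0 P1_id HI HI2 cJ JI.
exists C => //; rewrite (leq_trans large (subset_leq_card JC)) andbT.
apply: nested_superset cJ nJ JC _.
exact: leq_trans (leq_sub2r b (ltnW (proper_card (children_proper CI)))) large.
Qed.
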